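(* Let $\beta>0$ and let $T$ be an even integer with $\beta/T\le1$. Let $\mathcal{I}:=\bigcup_{\alpha\in[0,\beta/T]}\Delta^2_\alpha$. For $b\in\{0,1\}$ let $\mathcal{L}^b:=(I_2,I_2,\mathcal{I},x_1,(\gamma_t)_t,(w_t^b)_t,(c_t)_t)$ be the simplex LDS on $\Delta^2$ with $x_1=(0,1)$, $c_t(x,u):=|x(2)-1/2|$ if $t>T/2$ and $c_t(x,u):=0$ otherwise, $\gamma_t:=\frac12\mathbf{1}[t=T/2]$, $w_t^0:=(1/2,1/2)$ and $w_t^1:=(1,0)$ for all $t$. Define $\pi^0(x):=\frac\beta T(1/2,1/2)$ and $\pi^1(x):=(0,0)$. Then $\pi^0,\pi^1\in\mathcal{K}(\mathcal{I})$, and: (i) the iterates $(x_t,u_t)_{t=1}^T$ produced by following $\pi^0$ in $\mathcal{L}^0$ satisfy $\sum_{t=1}^Tc_t(x_t,u_t)\le\frac T\beta e^{-\beta/2}$; (ii) the iterates produced by following $\pi^1$ in $\mathcal{L}^1$ satisfy $\sum_{t=1}^Tc_t(x_t,u_t)=0$.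
   Context: $\Delta^2$ is the probability simplex in $\mathbb{R}^2$, $\Delta^2_\alpha:=\alpha\Delta^2$, $I_2$ is the $2\times2$ identity, $x(i)$ denotes the $i$-th coordinate. A simplex LDS $(A,B,\mathcal{I},x_1,(\gamma_t),(w_t),(c_t))$ evolves as $x_{t+1}=(1-\gamma_t)[(1-\|u_t\|_1)Ax_t+Bu_t]+\gamma_tw_t$ for controls $u_t\in\mathcal{I}$, with cost $c_t(x_t,u_t)$. $\mathbb{S}^2_\alpha:=\{\alpha M:M\text{ a }2\times2\text{ column-stochastic matrix}\}$, and $\mathcal{K}(\mathcal{I})$ is the set of linear time-invariant policies $x\mapsto Kx$ with $K\in\bigcup_{\alpha\in[0,\beta/T]}\mathbb{S}^2_\alpha$ (on $\Delta^2$, $\pi^0$ is such a policy with $K=\frac\beta T\cdot\frac12\mathbf{1}\mathbf{1}^\top$). *)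

From HB Require Import structures.
From mathcomp Require Import all_boot all_order all_algebra.
From mathcomp Require Import all_classical all_reals all_analysis.
Set Implicit Arguments. Unset Strict Implicit. Unset Printing Implicit Defensive.
Import Order.TTheory GRing.Theory Num.Theory.
Local Open Scope ring_scope.

Section Defs.
Variable R : realType.

Definition simplex (n : nat) : set 'cV[R]_n :=
  [set x | (forall i, 0 <= x i 0) /\ \sum_i x i 0 = 1].

Definition scaled_simplex (n : nat) (alpha : R) : set 'cV[R]_n :=
  [set x | exists2 y, simplex y & x = alpha *: y].

Definition ctrl_set (beta : R) (T : nat) : set 'cV[R]_2 :=
  [set u | exists2 alpha, 0 <= alpha <= beta / T%:R & scaled_simplex alpha u].

Definition column_stochastic (n : nat) (M : 'M[R]_n) : Prop :=
  (forall i j, 0 <= M i j) /\ (forall j, \sum_i M i j = 1).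

Definition scaled_stoch (n : nat) (alpha : R) : set 'M[R]_n :=
  [set K | exists2 M, column_stochastic M & K = alpha *: M].

Definition lti_policies (beta : R) (T : nat) : set ('cV[R]_2 -> 'cV[R]_2) :=
  [set pi | exists2 alpha, 0 <= alpha <= beta / T%:R &
     exists2 K, scaled_stoch alpha K & forall x, simplex x -> pi x = K *m x].

Definition l1norm (n : nat) (u : 'cV[R]_n) : R := \sum_i `|u i 0|.

Definition lds_step (n : nat) (A B : 'M[R]_n) (gamma : nat -> R)
  (w : nat -> 'cV[R]_n) (t : nat) (x u : 'cV[R]_n) : 'cV[R]_n :=
  (1 - gamma t) *: ((1 - l1norm u) *: (A *m x) + B *m u) + gamma t *: w t.

(* lds_traj ... k = x_{k+1}, the state at time k+1, when following pi
   (u_t = pi x_t) from x_1 *)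
Fixpoint lds_traj (n : nat) (A B : 'M[R]_n) (x1 : 'cV[R]_n) (gamma : nat -> R)
  (w : nat -> 'cV[R]_n) (pi : 'cV[R]_n -> 'cV[R]_n) (k : nat) : 'cV[R]_n :=
  match k with
  | 0 => x1
  | k'.+1 => let x := lds_traj A B x1 gamma w pi k' in
             lds_step A B gamma w k'.+1 x (pi x)
  end.

Definition lds_cost (n : nat) (A B : 'M[R]_n) (x1 : 'cV[R]_n) (gamma : nat -> R)
  (w : nat -> 'cV[R]_n) (c : nat -> 'cV[R]_n -> 'cV[R]_n -> R)
  (pi : 'cV[R]_n -> 'cV[R]_n) (T : nat) : R :=
  \sum_(k < T) let x := lds_traj A B x1 gamma w pi k in c k.+1 x (pi x).

Definition vec2 (a b : R) : 'cV[R]_2 :=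
  \col_(i < 2) (if i == 0 :> nat then a else b).

(* coordinate x(2) (1-based) *)
Definition coord2 (x : 'cV[R]_2) : R := x (1 : 'I_2) 0.

End Defs.

(* Under the identity dynamics the uniform control of total mass alpha pulls the
   second coordinate towards 1/2 by the factor 1 - alpha per step, and the noise
   vector w^0 = (1/2, 1/2) only halves the remaining deviation at time T/2.  So
   following pi^0 in L^0 the cost at time t > T/2 is (1 - alpha)^(t-1) / 4, and
   the tail of this geometric series is at most (1 - alpha)^(T/2) / alpha, which
   is at most e^(-beta/2) T / beta because 1 - alpha <= e^(-alpha).  In L^1 the
   state stays at (0, 1) until the noise w^1 = (1, 0) moves it to (1/2, 1/2) at
   time T/2, where it rests since pi^1 never acts. *)
From HB Require Import structures.
From mathcomp Require Import all_boot all_order all_algebra.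
From mathcomp Require Import all_classical all_reals all_analysis.
From mathcomp Require Import ring lra.
Set Implicit Arguments. Unset Strict Implicit. Unset Printing Implicit Defensive.
Import Order.TTheory GRing.Theory Num.Theory.
Local Open Scope ring_scope.

Section SimplexLDS2.
Variable R : realType.

Definition uniform_ctrl (alpha : R) : 'cV[R]_2 := vec2 (alpha * 2^-1) (alpha * 2^-1).

Lemma vec2E (a b : R) (i : 'I_2) : vec2 a b i 0 = if i == 0 :> nat then a else b.
Proof. by rewrite mxE. Qed.

Lemma sum_ord2 (f : 'I_2 -> R) : \sum_i f i = f 0 + f 1.
Proof. by rewrite big_ord_recl big_ord1; congr (_ + f _); apply: val_inj. Qed.

Lemma l1norm_uniform_ctrl (alpha : R) : 0 <= alpha -> l1norm (uniform_ctrl alpha) = alpha.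
Proof.
move=> alpha_ge0; rewrite /l1norm sum_ord2 !vec2E /= ger0_norm; first lra.
by rewrite mulr_ge0 // invr_ge0 ler0n.
Qed.

Lemma lti_policies_uniform (beta : R) (T : nat) (alpha : R) :
  0 <= alpha <= beta / T%:R -> lti_policies beta T (fun _ => uniform_ctrl alpha).
Proof.
move=> alpha_range; exists alpha => //.
exists (alpha *: const_mx 2^-1).
  exists (const_mx 2^-1) => //; split=> [i j|j].
    by rewrite mxE invr_ge0 ler0n.
  by rewrite sum_ord2 !mxE; lra.
move=> x [_ sum_x]; apply/matrixP => i j.
rewrite ord1 vec2E -scalemxAl !mxE.
under eq_bigr do rewrite mxE.
by rewrite -mulr_sumr sum_x mulr1 if_same.
Qed.

Lemma coord2_step_uniform (gamma : nat -> R) w t x (alpha : R) : 0 <= alpha ->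
  coord2 (lds_step 1%:M 1%:M gamma w t x (uniform_ctrl alpha)) - 2^-1 =
  (1 - gamma t) * (1 - alpha) * (coord2 x - 2^-1)
  + gamma t * (coord2 (w t) - 2^-1).
Proof.
move=> alpha_ge0.
rewrite /lds_step !mul1mx l1norm_uniform_ctrl // /coord2 !mxE /=; ring.
Qed.

Lemma geometric_tail_le (alpha : R) (m n : nat) : 0 <= alpha <= 1 ->
  alpha * \sum_(m <= k < n) (1 - alpha) ^+ k <= (1 - alpha) ^+ m.
Proof.
move=> /andP[alpha_ge0 alpha_le1]; have q_ge0 : 0 <= 1 - alpha by rewrite subr_ge0.
have [m_le_n|n_lt_m] := leqP m n; last first.
  by rewrite big_geq ?mulr0 ?exprn_ge0 // ltnW.
have -> : alpha * \sum_(m <= k < n) (1 - alpha) ^+ k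
    = \sum_(m <= k < n) ((- (1 - alpha) ^+ k.+1) - (- (1 - alpha) ^+ k)).
  by rewrite mulr_sumr; apply: eq_bigr => k _; rewrite exprS; ring.
by rewrite telescope_sumr // opprK addrC lerBlDr lerDl exprn_ge0.
Qed.

Lemma expr_le_expR (a : R) (n : nat) : a <= 1 -> (1 - a) ^+ n <= expR (- (n%:R * a)).
Proof.
move=> a_le1; rewrite -mulrN expRM_natl lerXn2r ?nnegrE ?expR_ge0 ?subr_ge0 //.
exact: expR_ge1Dx.
Qed.

Lemma lds_trajS (n : nat) (A B : 'M[R]_n) x1 gamma w pi k :
  lds_traj A B x1 gamma w pi k.+1
  = lds_step A B gamma w k.+1 (lds_traj A B x1 gamma w pi k)
      (pi (lds_traj A B x1 gamma w pi k)).
Proof. by []. Qed.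

Lemma coord2_traj_mixing (m : nat) (alpha : R) (k : nat) : (0 < m)%N -> 0 <= alpha ->
  coord2 (lds_traj 1%:M 1%:M (vec2 0 1) (fun t => if t == m then 2^-1 else 0)
            (fun _ => vec2 2^-1 2^-1) (fun _ => uniform_ctrl alpha) k) - 2^-1
  = 2^-1 * (1 - alpha) ^+ k * (if (m <= k)%N then 2^-1 else 1).
Proof.
move=> m_gt0 alpha_ge0; elim: k => [|k IH].
  by rewrite /coord2 vec2E leqNgt m_gt0 /= expr0; lra.
rewrite lds_trajS coord2_step_uniform // IH /coord2 vec2E /= exprS.
case: (ltngtP k.+1 m) => [lt_k1m|lt_mk1|<-].
- by rewrite leqNgt (ltnW lt_k1m) /=; ring.
- by rewrite -ltnS lt_mk1 /=; ring.
- by rewrite ltnn /=; field.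
Qed.

Lemma coord2_traj_reset (m k : nat) : (0 < m)%N ->
  coord2 (lds_traj 1%:M 1%:M (vec2 0 1) (fun t => if t == m then 2^-1 else 0)
            (fun _ => vec2 1 0) (fun _ => uniform_ctrl 0) k) - 2^-1
  = if (m <= k)%N then 0 else 2^-1.
Proof.
move=> m_gt0; elim: k => [|k IH].
  by rewrite /coord2 vec2E leqNgt m_gt0 /=; lra.
rewrite lds_trajS coord2_step_uniform // IH /coord2 vec2E /=.
case: (ltngtP k.+1 m) => [lt_k1m|lt_mk1|<-].
- by rewrite leqNgt (ltnW lt_k1m) /=; ring.
- by rewrite -ltnS lt_mk1 /=; ring.
- by rewrite ltnn /=; field.
Qed.

Lemma lds_cost_mixing (m T : nat) (alpha : R) : (0 < m)%N -> 0 <= alpha <= 1 ->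
  lds_cost 1%:M 1%:M (vec2 0 1) (fun t => if t == m then 2^-1 else 0)
    (fun _ => vec2 2^-1 2^-1)
    (fun t x _ => if (m < t)%N then `|coord2 x - 2^-1| else 0)
    (fun _ => uniform_ctrl alpha) T
  = 4^-1 * \sum_(m <= k < T) (1 - alpha) ^+ k.
Proof.
move=> m_gt0 /andP[alpha_ge0 alpha_le1].
rewrite /lds_cost big_geq_mkord mulr_sumr [RHS]big_mkcond; apply: eq_bigr => k _ /=.
rewrite ltnS; case: ifP => [m_le_k|//].
rewrite coord2_traj_mixing // m_le_k ger0_norm; first by field.
by rewrite !mulr_ge0 ?invr_ge0 ?ler0n ?exprn_ge0 ?subr_ge0.
Qed.

Lemma lds_cost_reset (m T : nat) : (0 < m)%N ->
  lds_cost 1%:M 1%:M (vec2 0 1) (fun t => if t == m then 2^-1 else 0)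
    (fun _ => vec2 1 0)
    (fun t x _ => if (m < t)%N then `|coord2 x - 2^-1| else 0)
    (fun _ => uniform_ctrl 0) T = 0.
Proof.
move=> m_gt0; rewrite /lds_cost big1 // => k _ /=.
by rewrite ltnS; case: ifP => [m_le_k|//]; rewrite coord2_traj_reset // m_le_k normr0.
Qed.

End SimplexLDS2.

Theorem lemma12 (R : realType) (beta : R) (T : nat)
  (hbeta : 0 < beta) (hT0 : (0 < T)%N) (hTeven : ~~ odd T)
  (hbT : beta / T%:R <= 1) :
  let x1 := vec2 (0 : R) 1 in
  let c := fun (t : nat) (x u : 'cV[R]_2) =>
             if (T./2 < t)%N then `|coord2 x - 2^-1| else 0 in
  let gamma := fun t : nat => if t == T./2 then (2^-1 : R) else 0 in
  let w0 := fun _ : nat => vec2 (2^-1 : R) (2^-1) in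
  let w1 := fun _ : nat => vec2 (1 : R) 0 in
  let pi0 := fun _ : 'cV[R]_2 => vec2 (beta / T%:R * 2^-1) (beta / T%:R * 2^-1) in
  let pi1 := fun _ : 'cV[R]_2 => vec2 (0 : R) 0 in
  [/\ lti_policies beta T pi0, lti_policies beta T pi1,
      lds_cost 1%:M 1%:M x1 gamma w0 c pi0 T <= T%:R / beta * expR (- (beta / 2))
    & lds_cost 1%:M 1%:M x1 gamma w1 c pi1 T = 0].
Proof.
move=> x1 c gamma w0 w1 pi0 pi1.
set m := T./2; set alpha := beta / T%:R.
have alpha_gt0 : 0 < alpha by rewrite divr_gt0 ?ltr0n.
have m_double : m.*2 = T by rewrite -[RHS]odd_double_half (negbTE hTeven).
have m_gt0 : (0 < m)%N by rewrite -double_gt0 m_double.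
have T_double : T%:R = m%:R * 2 :> R by rewrite -m_double -muln2 natrM.
have m_alpha : m%:R * alpha = beta / 2.
  by rewrite /alpha T_double; field; rewrite pnatr_eq0 -lt0n m_gt0.
have pi1E : pi1 = fun _ => uniform_ctrl 0 by rewrite /pi1 /uniform_ctrl mul0r.
split.
- by apply: lti_policies_uniform; rewrite (ltW alpha_gt0) lexx.
- by rewrite pi1E; apply: lti_policies_uniform; rewrite lexx ltW.
- rewrite lds_cost_mixing ?(ltW alpha_gt0) //.
  rewrite -/m -/alpha; set S := \sum_(m <= k < T) _.
  have S_ge0 : 0 <= S by rewrite sumr_ge0 // => k _; rewrite exprn_ge0 // subr_ge0.
  have alpha_S : alpha * S <= expR (- (beta / 2)).
    rewrite -m_alpha; apply: le_trans (expr_le_expR _ hbT).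
    by apply: geometric_tail_le; rewrite ltW.
  apply: (@le_trans _ _ S); first by rewrite ler_piMl // invf_le1 ?ler1n.
  rewrite -invf_div -[S](mulKf (lt0r_neq0 alpha_gt0)).
  by rewrite ler_wpM2l // invr_ge0 ltW.
- by rewrite pi1E lds_cost_reset.
Qed.
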